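(* Let $N_1,N_2\ge1$, let $C_k=\{(\xi_j)_{1\le j\le N_k}\in[0,1]^{N_k}:\sum_j\xi_j=1\}$ for $k=1,2$, and let $L$ be a nonzero real $N_1\times N_2$ matrix such that there exist $z_1\in C_1$, $z_2\in C_2$ with $-Lz_2\in N_{C_1}z_1$ and $L^\top z_1\in N_{C_2}z_2$. Let $\varepsilon\in]0,1/(\|L\|+1)[$ and let $(\gamma_n)_{n\in\mathbb N}$ be a sequence in $[\varepsilon,(1-\varepsilon)/\|L\|]$. Let $x_{1,0}\in\mathbb R^{N_1}$, $x_{2,0}\in\mathbb R^{N_2}$, and for every $n$ set $y_{1,n}=x_{1,n}-\gamma_nLx_{2,n}$, $y_{2,n}=x_{2,n}+\gamma_nL^\top x_{1,n}$, $p_{1,n}=P_{C_1}y_{1,n}$, $p_{2,n}=P_{C_2}y_{2,n}$, $q_{1,n}=p_{1,n}-\gamma_nLp_{2,n}$, $q_{2,n}=p_{2,n}+\gamma_nL^\top p_{1,n}$, $x_{1,n+1}=x_{1,n}-y_{1,n}+q_{1,n}$, $x_{2,n+1}=x_{2,n}-y_{2,n}+q_{2,n}$. Then $x_{1,n}\to\overline x_1$ and $x_{2,n}\to\overline x_2$, where $\overline x_1\in\operatorname{Argmin}_{x\in C_1}x^\top L\overline x_2$ and $\overline x_2\in\operatorname{Argmax}_{x\in C_2}\overline x_1^\top Lx$.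
   Context: $\|L\|$ is the operator norm of $L$ (Euclidean norms). For a nonempty closed convex set $C$, $P_C$ is the Euclidean projection onto $C$ and $N_Cx=\{u:\langle y-x,u\rangle\le0\ \forall y\in C\}$ for $x\in C$ (empty otherwise) is the normal cone. *)

(* real vectors in R^N are functions nat -> R, only indices < N matter;
   an N1 x N2 matrix is L : nat -> nat -> R (entries L i j with i < N1, j < N2). *)
From Stdlib Require Import Reals Lra.
Open Scope R_scope.

Fixpoint vsum (N : nat) (f : nat -> R) : R :=
  match N with O => 0 | S k => vsum k f + f k end.

Definition dot (N : nat) (x y : nat -> R) : R := vsum N (fun i => x i * y i).
Definition vnorm (N : nat) (x : nat -> R) : R := sqrt (dot N x x).

Definition Mv (N2 : nat) (L : nat -> nat -> R) (x : nat -> R) : nat -> R :=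
  fun i => vsum N2 (fun j => L i j * x j).
Definition Mtv (N1 : nat) (L : nat -> nat -> R) (x : nat -> R) : nat -> R :=
  fun j => vsum N1 (fun i => L i j * x i).

Definition simplex (N : nat) (x : nat -> R) : Prop :=
  (forall i, (i < N)%nat -> 0 <= x i <= 1) /\ vsum N x = 1.

Definition in_normal_cone (N : nat) (C : (nat -> R) -> Prop) (x u : nat -> R) : Prop :=
  C x /\ forall y, C y -> dot N (fun i => y i - x i) u <= 0.

(* p = P_C y (Euclidean projection; unique on the indices < N) *)
Definition is_proj (N : nat) (C : (nat -> R) -> Prop) (y p : nat -> R) : Prop :=
  C p /\ forall z, C z -> vnorm N (fun i => y i - p i) <= vnorm N (fun i => y i - z i).

Definition is_opnorm (N1 N2 : nat) (L : nat -> nat -> R) (m : R) : Prop :=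
  is_lub (fun r => exists x, vnorm N2 x <= 1 /\ r = vnorm N1 (Mv N2 L x)) m.

(* Tseng's forward-backward-forward splitting for the monotone inclusion
   0 \in N_{C1 x C2} z + A z, where A (z1, z2) = (L z2, - L^T z1) is skew and
   ||L||-Lipschitz.  For every zero z, the projection inequalities and the skewness
   of A give the Fejer inequality
     ||x_{n+1} - z||^2 <= ||x_n - z||^2 - eps ||x_n - p_n||^2,
   so x_n - p_n -> 0.  A cluster point of the bounded sequence (p_n) satisfies the
   limiting projection inequalities, hence is a zero, i.e. a saddle point of
   x^T L y on C1 x C2; Fejer monotonicity with respect to this point then forces
   the whole sequence to converge to it. *)

From Stdlib Require Import Reals Lra Lia ClassicalEpsilon.
Open Scope R_scope.

(** * Sums, inner products and the matrix L *)

Lemma vsum_ext N f g : (forall i, (i < N)%nat -> f i = g i) -> vsum N f = vsum N g.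
Proof.
  induction N as [|N IH]; intros H; simpl; [reflexivity|].
  rewrite IH by (intros; apply H; lia). rewrite H by lia. reflexivity.
Qed.

Lemma vsum_plus N f g : vsum N f + vsum N g = vsum N (fun i => f i + g i).
Proof. induction N as [|N IH]; simpl; [ring|]. rewrite <- IH. ring. Qed.

Lemma vsum_minus N f g : vsum N f - vsum N g = vsum N (fun i => f i - g i).
Proof. induction N as [|N IH]; simpl; [ring|]. rewrite <- IH. ring. Qed.

Lemma vsum_scal N c f : c * vsum N f = vsum N (fun i => c * f i).
Proof. induction N as [|N IH]; simpl; [ring|]. rewrite <- IH. ring. Qed.

Lemma vsum_opp N f : - vsum N f = vsum N (fun i => - f i).
Proof. induction N as [|N IH]; simpl; [ring|]. rewrite <- IH. ring. Qed.

Lemma vsum_nonneg N f : (forall i, (i < N)%nat -> 0 <= f i) -> 0 <= vsum N f.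
Proof.
  induction N as [|N IH]; intros H; simpl; [lra|].
  specialize (IH (fun i Hi => H i ltac:(lia))). specialize (H N ltac:(lia)). lra.
Qed.

Lemma vsum_ge_term N f k :
  (forall i, (i < N)%nat -> 0 <= f i) -> (k < N)%nat -> f k <= vsum N f.
Proof.
  induction N as [|N IH]; intros H Hk; simpl; [lia|].
  assert (0 <= vsum N f) by (apply vsum_nonneg; intros; apply H; lia).
  destruct (Nat.eq_dec k N) as [->|Hne]; [lra|].
  specialize (IH (fun i Hi => H i ltac:(lia)) ltac:(lia)). specialize (H N ltac:(lia)). lra.
Qed.

Lemma vsum_swap N1 N2 (f : nat -> nat -> R) :
  vsum N1 (fun i => vsum N2 (fun j => f i j)) = vsum N2 (fun j => vsum N1 (fun i => f i j)).
Proof.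
  induction N1 as [|N1 IH]; simpl.
  - induction N2 as [|N2 IH2]; simpl; [reflexivity|]. rewrite <- IH2. ring.
  - rewrite IH, vsum_plus. reflexivity.
Qed.

Definition sqdist N (a b : nat -> R) : R := dot N (fun i => a i - b i) (fun i => a i - b i).

(* Reduces an identity between linear combinations of [dot]/[sqdist] over the same
   range to an identity between the summands. *)
Ltac merge_vsums :=
  unfold sqdist, dot;
  repeat rewrite vsum_scal; repeat rewrite vsum_opp;
  repeat (rewrite vsum_plus || rewrite vsum_minus);
  apply vsum_ext.

Ltac vsum_ring := merge_vsums; intros; cbv beta; ring.

Lemma dot_nonneg N u : 0 <= dot N u u.
Proof. apply vsum_nonneg; intros; nra. Qed.

Lemma dot_comm N u v : dot N u v = dot N v u.
Proof. apply vsum_ext; intros; ring. Qed.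

Lemma dot_zero_l N v : dot N (fun _ => 0) v = 0.
Proof. induction N as [|N IH]; unfold dot in *; simpl; [reflexivity|]. rewrite IH. ring. Qed.

Lemma dot_cauchy_schwarz N u v : (dot N u v) ^ 2 <= dot N u u * dot N v v.
Proof.
  set (A := dot N u u); set (B := dot N u v); set (C := dot N v v).
  assert (Hquad : forall t, 0 <= A - 2 * t * B + t ^ 2 * C).
  { intro t. replace (A - 2 * t * B + t ^ 2 * C)
      with (dot N (fun i => u i - t * v i) (fun i => u i - t * v i))
      by (unfold A, B, C; vsum_ring).
    apply dot_nonneg. }
  assert (HA : 0 <= A) by apply dot_nonneg.
  assert (HC : 0 <= C) by apply dot_nonneg.
  destruct (Rle_lt_or_eq_dec 0 C HC) as [Cpos|C0].
  - specialize (Hquad (B / C)).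
    replace (A - 2 * (B / C) * B + (B / C) ^ 2 * C) with ((A * C - B ^ 2) / C) in Hquad
      by (field; lra).
    assert (0 <= A * C - B ^ 2); [|lra].
    apply (Rmult_le_reg_r (/ C)); [apply Rinv_0_lt_compat; lra|].
    rewrite Rmult_0_l. exact Hquad.
  - destruct (Req_dec B 0) as [B0|Bn0].
    + rewrite B0. nra.
    + specialize (Hquad ((A + 1) / (2 * B))). rewrite <- C0 in Hquad.
      replace (A - 2 * ((A + 1) / (2 * B)) * B + ((A + 1) / (2 * B)) ^ 2 * 0) with (-1) in Hquad
        by (field; lra).
      lra.
Qed.

Lemma sqdist_nonneg N a b : 0 <= sqdist N a b.
Proof. apply dot_nonneg. Qed.

Lemma sqdist_ge_coord N a b i : (i < N)%nat -> (a i - b i) ^ 2 <= sqdist N a b.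
Proof.
  intros Hi. unfold sqdist, dot.
  replace ((a i - b i) ^ 2) with ((a i - b i) * (a i - b i)) by ring.
  apply (vsum_ge_term N (fun k => (a k - b k) * (a k - b k))); [intros k _; apply Rle_0_sqr|exact Hi].
Qed.

Lemma dot_Mv_Mtv N1 N2 L a b : dot N1 (Mv N2 L a) b = dot N2 a (Mtv N1 L b).
Proof.
  unfold dot, Mv, Mtv.
  transitivity (vsum N1 (fun i => vsum N2 (fun j => L i j * a j * b i))).
  - apply vsum_ext; intros i _; cbv beta. rewrite (Rmult_comm _ (b i)), vsum_scal.
    apply vsum_ext; intros; ring.
  - rewrite vsum_swap. apply vsum_ext; intros j _; cbv beta. rewrite vsum_scal.
    apply vsum_ext; intros; ring.
Qed.

Lemma Mv_sub N2 L u v i : Mv N2 L (fun j => u j - v j) i = Mv N2 L u i - Mv N2 L v i.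
Proof. unfold Mv. rewrite vsum_minus. apply vsum_ext; intros; ring. Qed.

Lemma Mtv_sub N1 L u v j : Mtv N1 L (fun i => u i - v i) j = Mtv N1 L u j - Mtv N1 L v j.
Proof. unfold Mtv. rewrite vsum_minus. apply vsum_ext; intros; ring. Qed.

Lemma Mv_scal N2 L c u i : Mv N2 L (fun j => c * u j) i = c * Mv N2 L u i.
Proof. unfold Mv. rewrite vsum_scal. apply vsum_ext; intros; ring. Qed.

(* The operator (z1, z2) |-> (L z2, - L^T z1) is skew. *)
Lemma skew_pairing N1 N2 L p1 p2 z1 z2 :
  dot N1 (Mv N2 L p2) (fun i => p1 i - z1 i) - dot N2 (Mtv N1 L p1) (fun j => p2 j - z2 j)
  = dot N1 (Mv N2 L z2) (fun i => p1 i - z1 i) - dot N2 (Mtv N1 L z1) (fun j => p2 j - z2 j).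
Proof.
  assert (Hadj := dot_Mv_Mtv N1 N2 L (fun j => p2 j - z2 j) (fun i => p1 i - z1 i)).
  assert (E1 : dot N1 (Mv N2 L (fun j => p2 j - z2 j)) (fun i => p1 i - z1 i)
               = dot N1 (Mv N2 L p2) (fun i => p1 i - z1 i) - dot N1 (Mv N2 L z2) (fun i => p1 i - z1 i)).
  { unfold dot. rewrite vsum_minus. apply vsum_ext; intros. rewrite Mv_sub. ring. }
  assert (E2 : dot N2 (fun j => p2 j - z2 j) (Mtv N1 L (fun i => p1 i - z1 i))
               = dot N2 (Mtv N1 L p1) (fun j => p2 j - z2 j) - dot N2 (Mtv N1 L z1) (fun j => p2 j - z2 j)).
  { unfold dot. rewrite vsum_minus. apply vsum_ext; intros. rewrite Mtv_sub. ring. }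
  lra.
Qed.

Lemma opnorm_nonneg N1 N2 L nL : is_opnorm N1 N2 L nL -> 0 <= nL.
Proof.
  intros [Hub _]. apply Rle_trans with (vnorm N1 (Mv N2 L (fun _ => 0))); [apply sqrt_pos|].
  apply Hub. exists (fun _ => 0). split; [|reflexivity].
  unfold vnorm. rewrite dot_zero_l, sqrt_0. lra.
Qed.

Lemma opnorm_unit_bound N1 N2 L nL x : is_opnorm N1 N2 L nL ->
  dot N2 x x <= 1 -> dot N1 (Mv N2 L x) (Mv N2 L x) <= nL ^ 2.
Proof.
  intros Hop Hx. destruct Hop as [Hub _].
  assert (Hle : vnorm N1 (Mv N2 L x) <= nL).
  { apply Hub. exists x. split; [|reflexivity]. rewrite <- sqrt_1. apply sqrt_le_1_alt, Hx. }
  unfold vnorm in Hle. rewrite <- (sqrt_sqrt (dot N1 _ _)) by apply dot_nonneg.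
  pose proof (sqrt_pos (dot N1 (Mv N2 L x) (Mv N2 L x))). nra.
Qed.

Lemma opnorm_bound N1 N2 L nL x : is_opnorm N1 N2 L nL ->
  dot N1 (Mv N2 L x) (Mv N2 L x) <= nL ^ 2 * dot N2 x x.
Proof.
  intros Hop. set (D := dot N2 x x). set (P := dot N1 (Mv N2 L x) (Mv N2 L x)).
  assert (HD : 0 <= D) by apply dot_nonneg.
  assert (Hdelta : forall delta, 0 < delta -> P <= nL ^ 2 * (D + delta)).
  { intros delta Hdelta. set (c := / sqrt (D + delta)).
    assert (Hs : 0 < sqrt (D + delta)) by (apply sqrt_lt_R0; lra).
    assert (Hc : c ^ 2 * (D + delta) = 1).
    { unfold c. rewrite <- (sqrt_sqrt (D + delta)) at 2 by lra. field. lra. }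
    assert (Hunit := opnorm_unit_bound N1 N2 L nL (fun j => c * x j) Hop).
    replace (dot N2 (fun j => c * x j) (fun j => c * x j)) with (c ^ 2 * D) in Hunit
      by (unfold D; vsum_ring).
    replace (dot N1 (Mv N2 L (fun j => c * x j)) (Mv N2 L (fun j => c * x j))) with (c ^ 2 * P) in Hunit
      by (unfold P, dot; rewrite vsum_scal; apply vsum_ext; intros; rewrite Mv_scal; ring).
    assert (c ^ 2 * P <= nL ^ 2) by (apply Hunit; nra).
    replace P with ((c ^ 2 * (D + delta)) * P) by (rewrite Hc; ring). nra. }
  apply Rle_plus_epsilon. intros e He.
  specialize (Hdelta (e / (nL ^ 2 + 1)) ltac:(apply Rdiv_lt_0_compat; nra)).
  assert (nL ^ 2 * (e / (nL ^ 2 + 1)) <= e).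
  { apply (Rmult_le_reg_r (nL ^ 2 + 1)); [nra|]. field_simplify; nra. }
  lra.
Qed.

Lemma opnorm_transpose_bound N1 N2 L nL y : is_opnorm N1 N2 L nL ->
  dot N2 (Mtv N1 L y) (Mtv N1 L y) <= nL ^ 2 * dot N1 y y.
Proof.
  intros Hop. set (T := Mtv N1 L y). set (a := dot N2 T T).
  assert (Ha : a = dot N1 (Mv N2 L T) y) by (unfold a; rewrite dot_Mv_Mtv; reflexivity).
  pose proof (dot_cauchy_schwarz N1 (Mv N2 L T) y) as Hcs. rewrite <- Ha in Hcs.
  pose proof (opnorm_bound N1 N2 L nL T Hop) as Hb. fold a in Hb.
  assert (Hy : 0 <= dot N1 y y) by apply dot_nonneg.
  assert (Ha0 : 0 <= a) by apply dot_nonneg.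
  assert (a ^ 2 <= nL ^ 2 * a * dot N1 y y) by nra.
  destruct (Rle_lt_or_eq_dec 0 a Ha0) as [apos|a0].
  - apply (Rmult_le_reg_l a); [lra|]. nra.
  - rewrite <- a0. nra.
Qed.

(** * Projections and saddle points *)

Definition convex (C : (nat -> R) -> Prop) : Prop :=
  forall p c t, C p -> C c -> 0 <= t <= 1 -> C (fun i => p i + t * (c i - p i)).

Lemma simplex_convex N : convex (simplex N).
Proof.
  intros p c t [Hp Sp] [Hc Sc] Ht. split.
  - intros i Hi. specialize (Hp i Hi). specialize (Hc i Hi). nra.
  - replace 1 with ((1 - t) * vsum N p + t * vsum N c) by (rewrite Sp, Sc; ring).
    rewrite !vsum_scal, vsum_plus. apply vsum_ext; intros; ring.
Qed.

Lemma proj_variational N C y p c : convex C -> is_proj N C y p -> C c ->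
  dot N (fun i => y i - p i) (fun i => c i - p i) <= 0.
Proof.
  intros Hconv [Hp Hmin] Hc.
  set (W := dot N (fun i => y i - p i) (fun i => c i - p i)).
  set (Q := dot N (fun i => c i - p i) (fun i => c i - p i)).
  assert (HQ : 0 <= Q) by apply dot_nonneg.
  assert (Hsmall : forall t, 0 < t <= 1 -> 2 * W <= t * Q).
  { intros t Ht. specialize (Hmin _ (Hconv p c t Hp Hc ltac:(lra))).
    unfold vnorm in Hmin. apply sqrt_le_0 in Hmin; try apply dot_nonneg.
    replace (dot N (fun i => y i - (p i + t * (c i - p i))) (fun i => y i - (p i + t * (c i - p i))))
      with (dot N (fun i => y i - p i) (fun i => y i - p i) - 2 * t * W + t ^ 2 * Q) in Hmin
      by (unfold W, Q; vsum_ring).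
    apply (Rmult_le_reg_l t); nra. }
  destruct (Rle_or_lt W 0) as [|Wpos]; [assumption|].
  assert (Ht : 0 < W / (Q + W) <= 1).
  { split; [apply Rdiv_lt_0_compat; lra|].
    apply (Rmult_le_reg_r (Q + W)); [lra|]. field_simplify; lra. }
  specialize (Hsmall _ Ht).
  assert (W / (Q + W) * Q <= W).
  { apply (Rmult_le_reg_r (Q + W)); [lra|]. field_simplify; nra. }
  lra.
Qed.

(* Zeros of N_{C1 x C2} + (L z2, - L^T z1), i.e. saddle points of x^T L y on C1 x C2. *)
Definition saddle_point N1 N2 L (C1 C2 : (nat -> R) -> Prop) (z1 z2 : nat -> R) : Prop :=
  C1 z1 /\ C2 z2 /\ forall c1 c2, C1 c1 -> C2 c2 ->
    0 <= dot N1 (Mv N2 L z2) (fun i => c1 i - z1 i) - dot N2 (Mtv N1 L z1) (fun j => c2 j - z2 j).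

Lemma normal_cone_saddle_point N1 N2 L C1 C2 z1 z2 :
  in_normal_cone N1 C1 z1 (fun i => - Mv N2 L z2 i) ->
  in_normal_cone N2 C2 z2 (Mtv N1 L z1) ->
  saddle_point N1 N2 L C1 C2 z1 z2.
Proof.
  intros [Hz1 Hnc1] [Hz2 Hnc2]. repeat split; try assumption. intros c1 c2 Hc1 Hc2.
  specialize (Hnc1 c1 Hc1). specialize (Hnc2 c2 Hc2).
  replace (dot N1 (Mv N2 L z2) (fun i => c1 i - z1 i))
    with (- dot N1 (fun i => c1 i - z1 i) (fun i => - Mv N2 L z2 i)) by vsum_ring.
  rewrite (dot_comm N2). lra.
Qed.

Lemma saddle_point_argmin N1 N2 L C1 C2 z1 z2 x : saddle_point N1 N2 L C1 C2 z1 z2 ->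
  C1 x -> dot N1 z1 (Mv N2 L z2) <= dot N1 x (Mv N2 L z2).
Proof.
  intros (_ & Hz2 & Hsad) Hx. specialize (Hsad x z2 Hx Hz2).
  replace (dot N2 (Mtv N1 L z1) (fun j => z2 j - z2 j)) with (dot N2 (fun _ => 0) (Mtv N1 L z1))
    in Hsad by vsum_ring.
  rewrite dot_zero_l in Hsad.
  replace (dot N1 (Mv N2 L z2) (fun i => x i - z1 i))
    with (dot N1 x (Mv N2 L z2) - dot N1 z1 (Mv N2 L z2)) in Hsad by vsum_ring.
  lra.
Qed.

Lemma saddle_point_argmax N1 N2 L C1 C2 z1 z2 y : saddle_point N1 N2 L C1 C2 z1 z2 ->
  C2 y -> dot N1 z1 (Mv N2 L y) <= dot N1 z1 (Mv N2 L z2).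
Proof.
  intros (Hz1 & _ & Hsad) Hy. specialize (Hsad z1 y Hz1 Hy).
  replace (dot N1 (Mv N2 L z2) (fun i => z1 i - z1 i)) with (dot N1 (fun _ => 0) (Mv N2 L z2))
    in Hsad by vsum_ring.
  rewrite dot_zero_l in Hsad.
  rewrite !(dot_comm N1 z1), !dot_Mv_Mtv.
  replace (dot N2 (Mtv N1 L z1) (fun j => y j - z2 j))
    with (dot N2 y (Mtv N1 L z1) - dot N2 z2 (Mtv N1 L z1)) in Hsad by vsum_ring.
  lra.
Qed.

(* One block of a forward-backward-forward step, with forward terms u at x and v at p. *)
Lemma fbf_block_identity N g (x y p q x' z u v : nat -> R) :
  (forall i, (i < N)%nat -> y i = x i - g * u i) ->
  (forall i, (i < N)%nat -> q i = p i - g * v i) ->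
  (forall i, (i < N)%nat -> x' i = x i - y i + q i) ->
  sqdist N x' z = sqdist N x z - sqdist N x p + 2 * dot N (fun i => y i - p i) (fun i => z i - p i)
                  + g ^ 2 * sqdist N u v - 2 * g * dot N v (fun i => p i - z i).
Proof.
  intros Hy Hq Hx'. merge_vsums. intros i Hi; cbv beta. rewrite Hx', Hq, Hy by exact Hi. ring.
Qed.

Lemma fbf_step_fejer N1 N2 L nL C1 C2 eps g
    (x1 y1 p1 q1 x1' x2 y2 p2 q2 x2' z1 z2 : nat -> R) :
  convex C1 -> convex C2 -> is_opnorm N1 N2 L nL ->
  0 <= eps -> 0 <= g -> g * nL <= 1 - eps ->
  (forall i, (i < N1)%nat -> y1 i = x1 i - g * Mv N2 L x2 i) ->
  (forall j, (j < N2)%nat -> y2 j = x2 j + g * Mtv N1 L x1 j) ->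
  is_proj N1 C1 y1 p1 -> is_proj N2 C2 y2 p2 ->
  (forall i, (i < N1)%nat -> q1 i = p1 i - g * Mv N2 L p2 i) ->
  (forall j, (j < N2)%nat -> q2 j = p2 j + g * Mtv N1 L p1 j) ->
  (forall i, (i < N1)%nat -> x1' i = x1 i - y1 i + q1 i) ->
  (forall j, (j < N2)%nat -> x2' j = x2 j - y2 j + q2 j) ->
  saddle_point N1 N2 L C1 C2 z1 z2 ->
  sqdist N1 x1' z1 + sqdist N2 x2' z2
  <= sqdist N1 x1 z1 + sqdist N2 x2 z2 - eps * (sqdist N1 x1 p1 + sqdist N2 x2 p2).
Proof.
  intros Hconv1 Hconv2 HnL Heps Hg HgnL Hy1 Hy2 Hp1 Hp2 Hq1 Hq2 Hx1 Hx2 Hz.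
  assert (Hy2' : forall j, (j < N2)%nat -> y2 j = x2 j - (- g) * Mtv N1 L x1 j)
    by (intros; rewrite Hy2 by assumption; ring).
  assert (Hq2' : forall j, (j < N2)%nat -> q2 j = p2 j - (- g) * Mtv N1 L p1 j)
    by (intros; rewrite Hq2 by assumption; ring).
  rewrite (fbf_block_identity N1 g x1 y1 p1 q1 x1' z1 (Mv N2 L x2) (Mv N2 L p2)) by assumption.
  rewrite (fbf_block_identity N2 (- g) x2 y2 p2 q2 x2' z2 (Mtv N1 L x1) (Mtv N1 L p1)) by assumption.
  destruct Hz as (Hz1 & Hz2 & Hsad).
  assert (V1 := proj_variational N1 C1 y1 p1 z1 Hconv1 Hp1 Hz1).
  assert (V2 := proj_variational N2 C2 y2 p2 z2 Hconv2 Hp2 Hz2).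
  assert (G := Hsad p1 p2 (proj1 Hp1) (proj1 Hp2)).
  (* by skewness, the saddle inequality at (p1, p2) controls the cross terms *)
  rewrite <- skew_pairing in G.
  assert (B1 : sqdist N1 (Mv N2 L x2) (Mv N2 L p2) <= nL ^ 2 * sqdist N2 x2 p2).
  { replace (sqdist N1 (Mv N2 L x2) (Mv N2 L p2))
      with (dot N1 (Mv N2 L (fun j => x2 j - p2 j)) (Mv N2 L (fun j => x2 j - p2 j)))
      by (apply vsum_ext; intros; rewrite Mv_sub; reflexivity).
    apply opnorm_bound, HnL. }
  assert (B2 : sqdist N2 (Mtv N1 L x1) (Mtv N1 L p1) <= nL ^ 2 * sqdist N1 x1 p1).
  { replace (sqdist N2 (Mtv N1 L x1) (Mtv N1 L p1))
      with (dot N2 (Mtv N1 L (fun i => x1 i - p1 i)) (Mtv N1 L (fun i => x1 i - p1 i)))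
      by (apply vsum_ext; intros; rewrite Mtv_sub; reflexivity).
    apply opnorm_transpose_bound, HnL. }
  assert (HnL0 := opnorm_nonneg _ _ _ _ HnL).
  assert (S1 := sqdist_nonneg N1 x1 p1). assert (S2 := sqdist_nonneg N2 x2 p2).
  assert (Hstep : g ^ 2 * nL ^ 2 <= 1 - eps).
  { assert (0 <= g * nL) by nra. nra. }
  assert (g ^ 2 * sqdist N1 (Mv N2 L x2) (Mv N2 L p2) <= g ^ 2 * nL ^ 2 * sqdist N2 x2 p2).
  { rewrite Rmult_assoc. apply Rmult_le_compat_l; [nra|exact B1]. }
  assert ((- g) ^ 2 * sqdist N2 (Mtv N1 L x1) (Mtv N1 L p1) <= g ^ 2 * nL ^ 2 * sqdist N1 x1 p1).
  { replace ((- g) ^ 2) with (g ^ 2) by ring. rewrite Rmult_assoc.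
    apply Rmult_le_compat_l; [nra|exact B2]. }
  assert (g * (dot N1 (Mv N2 L p2) (fun i => p1 i - z1 i)
               - dot N2 (Mtv N1 L p1) (fun j => p2 j - z2 j)) >= 0) by nra.
  nra.
Qed.

(** * Real sequences *)

Lemma cv_const c : Un_cv (fun _ => c) c.
Proof. intros e He. exists O. intros. unfold Rdist. rewrite Rminus_diag, Rabs_R0. lra. Qed.

Lemma cv_of_sq_bound (u e : nat -> R) a :
  (forall n, (u n - a) ^ 2 <= e n) -> Un_cv e 0 -> Un_cv u a.
Proof.
  intros Hu He r Hr. destruct (He (r ^ 2) ltac:(nra)) as [N HN]. exists N. intros n Hn.
  specialize (HN n Hn). specialize (Hu n). unfold Rdist in *. rewrite Rminus_0_r in HN.
  apply Rabs_def2 in HN. destruct HN as [HN _].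
  assert (Habs : Rabs (u n - a) < Rabs r) by (apply Rsqr_lt_abs_0; unfold Rsqr; nra).
  rewrite (Rabs_right r) in Habs by lra. exact Habs.
Qed.

Lemma fejer_residual_cv0 (d e : nat -> R) eps : 0 < eps ->
  (forall n, 0 <= d n) -> (forall n, 0 <= e n) ->
  (forall n, d (S n) <= d n - eps * e n) -> Un_cv e 0.
Proof.
  intros Heps Hd He Hdec.
  assert (Hdecr : Un_decreasing d) by (intro n; specialize (Hdec n); specialize (He n); nra).
  assert (Hlb : has_lb d) by (exists 0; intros x [n ->]; unfold opp_seq; specialize (Hd n); lra).
  destruct (decreasing_cv d Hdecr Hlb) as [l Hl].
  intros r Hr. destruct (Hl (eps * r / 2) ltac:(nra)) as [N HN]. exists N. intros n Hn.
  pose proof (HN n Hn) as A1. pose proof (HN (S n) ltac:(lia)) as A2. unfold Rdist in *.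
  apply Rabs_def2 in A1. apply Rabs_def2 in A2.
  specialize (Hdec n). specialize (He n).
  rewrite Rminus_0_r, Rabs_right by lra.
  apply (Rmult_lt_reg_l eps); lra.
Qed.

Lemma limit_nonneg_of_le_scaled (g s t : nat -> R) eps sl : 0 < eps -> (forall n, eps <= g n) ->
  (forall n, t n <= g n * s n) -> Un_cv s sl -> Un_cv t 0 -> 0 <= sl.
Proof.
  intros Heps Hg Hts Hs Ht. destruct (Rle_or_lt 0 sl) as [|Hneg]; [assumption|]. exfalso.
  destruct (Hs (- sl / 2) ltac:(lra)) as [Na HNa].
  destruct (Ht (- (eps * sl) / 2) ltac:(nra)) as [Nb HNb].
  set (n := Nat.max Na Nb).
  specialize (HNa n ltac:(lia)). specialize (HNb n ltac:(lia)). unfold Rdist in *.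
  rewrite Rminus_0_r in HNb. apply Rabs_def2 in HNa. apply Rabs_def2 in HNb.
  specialize (Hts n). specialize (Hg n).
  assert (g n * s n <= eps * s n) by nra.
  nra.
Qed.

Lemma decreasing_subseq_cv0 (d : nat -> R) (sg : nat -> nat) :
  Un_decreasing d -> (forall n, 0 <= d n) -> Un_cv (fun n => d (sg n)) 0 -> Un_cv d 0.
Proof.
  intros Hdec Hd Hsub r Hr. destruct (Hsub r Hr) as [K HK]. exists (sg K). intros n Hn.
  specialize (HK K (le_n K)). unfold Rdist in *. rewrite Rminus_0_r in *.
  pose proof (decreasing_prop d (sg K) n Hdec Hn).
  pose proof (Hd n). pose proof (Hd (sg K)).
  rewrite Rabs_right in * by lra. lra.
Qed.

Definition strictly_increasing (phi : nat -> nat) : Prop := forall n, (phi n < phi (S n))%nat.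

Lemma strictly_increasing_lt phi : strictly_increasing phi ->
  forall m n, (m < n)%nat -> (phi m < phi n)%nat.
Proof. intros H m n Hmn. induction Hmn as [|n _ IH]; [apply H|]. specialize (H n). lia. Qed.

Lemma strictly_increasing_ge phi : strictly_increasing phi -> forall n, (n <= phi n)%nat.
Proof. intros H n. induction n as [|n IH]; [lia|]. specialize (H n). lia. Qed.

Lemma strictly_increasing_comp phi psi : strictly_increasing phi -> strictly_increasing psi ->
  strictly_increasing (fun n => phi (psi n)).
Proof. intros Hphi Hpsi n. apply (strictly_increasing_lt phi Hphi), Hpsi. Qed.

Lemma cv_subseq phi u l : strictly_increasing phi -> Un_cv u l -> Un_cv (fun n => u (phi n)) l.
Proof.
  intros Hphi Hu r Hr. destruct (Hu r Hr) as [N HN]. exists N. intros n Hn.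
  apply HN. pose proof (strictly_increasing_ge phi Hphi n). lia.
Qed.

Lemma bounded_cv_subseq (u : nat -> R) a b : (forall n, a <= u n <= b) ->
  exists phi l, strictly_increasing phi /\ Un_cv (fun n => u (phi n)) l.
Proof.
  intros Hu.
  destruct (Bolzano_Weierstrass u (fun c => a <= c <= b) (compact_P3 a b) Hu) as [l Hl].
  assert (Hnear : forall N k, exists p, (N <= p)%nat /\ Rabs (u p - l) < / INR (S k)).
  { intros N k. assert (Hpos : 0 < / INR (S k)) by (apply Rinv_0_lt_compat, lt_0_INR; lia).
    destruct (Hl (disc l (mkposreal _ Hpos)) N) as [p [Hp Hv]].
    - exists (mkposreal _ Hpos). intros y Hy. exact Hy.
    - exists p. split; [exact Hp|exact Hv]. }
  pose (pick N k := proj1_sig (constructive_indefinite_description _ (Hnear N k))).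
  assert (Hpick : forall N k, (N <= pick N k)%nat /\ Rabs (u (pick N k) - l) < / INR (S k))
    by (intros N k; exact (proj2_sig (constructive_indefinite_description _ (Hnear N k)))).
  pose (phi := fix phi n := match n with O => pick O O | S m => pick (S (phi m)) (S m) end).
  exists phi, l. split.
  - intro n. simpl. destruct (Hpick (S (phi n)) (S n)). lia.
  - assert (Hphi : forall n, Rabs (u (phi n) - l) < / INR (S n)) by (intros [|n]; apply Hpick).
    intros e He. destruct (archimed_cor1 e He) as [N [HN HN0]]. exists N. intros n Hn.
    apply Rlt_trans with (/ INR (S n)); [apply Hphi|].
    apply Rle_lt_trans with (/ INR N); [|exact HN].
    apply Rinv_le_contravar; [apply lt_0_INR; lia|apply le_INR; lia].
Qed.

Lemma bounded_vec_cv_subseq K (w : nat -> nat -> R) a b :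
  (forall n k, (k < K)%nat -> a <= w n k <= b) ->
  exists phi l, strictly_increasing phi /\
    forall k, (k < K)%nat -> Un_cv (fun n => w (phi n) k) (l k).
Proof.
  induction K as [|K IH]; intros Hw.
  - exists (fun n => n), (fun _ => 0). split; [intro n; lia|intros; lia].
  - destruct IH as (phi & l & Hphi & Hl); [intros; apply Hw; lia|].
    destruct (bounded_cv_subseq (fun n => w (phi n) K) a b) as (psi & lK & Hpsi & HlK);
      [intros; apply Hw; lia|].
    exists (fun n => phi (psi n)), (fun k => if Nat.eqb k K then lK else l k). split.
    + apply strictly_increasing_comp; assumption.
    + intros k Hk. destruct (Nat.eqb_spec k K) as [->|Hne]; [exact HlK|].
      apply (cv_subseq psi (fun n => w (phi n) k)); [assumption|]. apply Hl. lia.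
Qed.

Lemma vsum_cv N (f : nat -> nat -> R) l :
  (forall i, (i < N)%nat -> Un_cv (fun n => f n i) (l i)) ->
  Un_cv (fun n => vsum N (f n)) (vsum N l).
Proof.
  induction N as [|N IH]; intros H; simpl; [apply cv_const|].
  apply CV_plus; [apply IH; intros; apply H; lia|apply H; lia].
Qed.

Lemma dot_cv N (u v : nat -> nat -> R) a b :
  (forall i, (i < N)%nat -> Un_cv (fun n => u n i) (a i)) ->
  (forall i, (i < N)%nat -> Un_cv (fun n => v n i) (b i)) ->
  Un_cv (fun n => dot N (u n) (v n)) (dot N a b).
Proof. intros Hu Hv. apply (vsum_cv N (fun n i => u n i * v n i)). intros. apply CV_mult; auto. Qed.

Lemma dot_cv0_l N (u v : nat -> nat -> R) b :
  (forall i, (i < N)%nat -> Un_cv (fun n => u n i) 0) ->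
  (forall i, (i < N)%nat -> Un_cv (fun n => v n i) (b i)) ->
  Un_cv (fun n => dot N (u n) (v n)) 0.
Proof. intros Hu Hv. rewrite <- (dot_zero_l N b). apply dot_cv; assumption. Qed.

Lemma sqdist_cv0 N (u : nat -> nat -> R) a :
  (forall i, (i < N)%nat -> Un_cv (fun n => u n i) (a i)) ->
  Un_cv (fun n => sqdist N (u n) a) 0.
Proof.
  intros Hu. assert (Hd : forall i, (i < N)%nat -> Un_cv (fun n => u n i - a i) 0).
  { intros i Hi. rewrite <- (Rminus_diag (a i)). apply CV_minus; [apply Hu, Hi|apply cv_const]. }
  apply (dot_cv0_l N (fun n i => u n i - a i) (fun n i => u n i - a i) (fun _ => 0)); assumption.
Qed.

Lemma Mv_cv N2 L (u : nat -> nat -> R) a :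
  (forall j, (j < N2)%nat -> Un_cv (fun n => u n j) (a j)) ->
  forall i, Un_cv (fun n => Mv N2 L (u n) i) (Mv N2 L a i).
Proof.
  intros Hu i. apply (vsum_cv N2 (fun n j => L i j * u n j)).
  intros. apply CV_mult; [apply cv_const|auto].
Qed.

Lemma Mtv_cv N1 L (u : nat -> nat -> R) a :
  (forall i, (i < N1)%nat -> Un_cv (fun n => u n i) (a i)) ->
  forall j, Un_cv (fun n => Mtv N1 L (u n) j) (Mtv N1 L a j).
Proof.
  intros Hu j. apply (vsum_cv N1 (fun n i => L i j * u n i)).
  intros. apply CV_mult; [apply cv_const|auto].
Qed.

Lemma simplex_closed N (u : nat -> nat -> R) a :
  (forall n, simplex N (u n)) -> (forall i, (i < N)%nat -> Un_cv (fun n => u n i) (a i)) ->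
  simplex N a.
Proof.
  intros Hu Ha. split.
  - intros i Hi. split.
    + apply (Rle_cv_lim (Un := fun _ => 0) (Vn := fun n => u n i)); [|apply cv_const|apply Ha, Hi].
      intro n. apply (proj1 (Hu n) i Hi).
    + apply (Rle_cv_lim (Un := fun n => u n i) (Vn := fun _ => 1)); [|apply Ha, Hi|apply cv_const].
      intro n. apply (proj1 (Hu n) i Hi).
  - apply (UL_sequence (fun n => vsum N (u n))); [apply vsum_cv, Ha|].
    apply (Un_cv_ext (fun _ => 1)); [intro n; symmetry; apply (proj2 (Hu n))|apply cv_const].
Qed.

(** * The iteration *)

Section FBFIteration.

Variables (N1 N2 : nat) (L : nat -> nat -> R) (nL eps : R) (gamma : nat -> R).
Variables (x1 y1 p1 q1 x2 y2 p2 q2 : nat -> nat -> R).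

Hypothesis HnL : is_opnorm N1 N2 L nL.
Hypothesis Heps : 0 < eps.
Hypothesis Hgamma_lb : forall n, eps <= gamma n.
Hypothesis Hgamma_ub : forall n, gamma n * nL <= 1 - eps.
Hypothesis Hy1 : forall n i, (i < N1)%nat -> y1 n i = x1 n i - gamma n * Mv N2 L (x2 n) i.
Hypothesis Hy2 : forall n j, (j < N2)%nat -> y2 n j = x2 n j + gamma n * Mtv N1 L (x1 n) j.
Hypothesis Hp1 : forall n, is_proj N1 (simplex N1) (y1 n) (p1 n).
Hypothesis Hp2 : forall n, is_proj N2 (simplex N2) (y2 n) (p2 n).
Hypothesis Hq1 : forall n i, (i < N1)%nat -> q1 n i = p1 n i - gamma n * Mv N2 L (p2 n) i.
Hypothesis Hq2 : forall n j, (j < N2)%nat -> q2 n j = p2 n j + gamma n * Mtv N1 L (p1 n) j.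
Hypothesis Hx1 : forall n i, (i < N1)%nat -> x1 (S n) i = x1 n i - y1 n i + q1 n i.
Hypothesis Hx2 : forall n j, (j < N2)%nat -> x2 (S n) j = x2 n j - y2 n j + q2 n j.

Let saddle := saddle_point N1 N2 L (simplex N1) (simplex N2).
Let dist_to z1 z2 n := sqdist N1 (x1 n) z1 + sqdist N2 (x2 n) z2.
Let residual n := sqdist N1 (x1 n) (p1 n) + sqdist N2 (x2 n) (p2 n).

Lemma dist_to_nonneg z1 z2 n : 0 <= dist_to z1 z2 n.
Proof. pose proof (sqdist_nonneg N1 (x1 n) z1). pose proof (sqdist_nonneg N2 (x2 n) z2). unfold dist_to. lra. Qed.

Lemma iter_fejer z1 z2 : saddle z1 z2 ->
  forall n, dist_to z1 z2 (S n) <= dist_to z1 z2 n - eps * residual n.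
Proof.
  intros Hz n. apply (fbf_step_fejer N1 N2 L nL (simplex N1) (simplex N2) eps (gamma n)
    _ (y1 n) (p1 n) (q1 n) _ _ (y2 n) (p2 n) (q2 n));
    auto using simplex_convex; [lra|specialize (Hgamma_lb n); lra].
Qed.

Lemma iter_residual_cv0 z1 z2 : saddle z1 z2 -> Un_cv residual 0.
Proof.
  intros Hz. apply (fejer_residual_cv0 (dist_to z1 z2) residual eps Heps).
  - apply dist_to_nonneg.
  - intro n. apply dist_to_nonneg.
  - apply iter_fejer, Hz.
Qed.

Lemma iter_projection_inequality c1 c2 n : simplex N1 c1 -> simplex N2 c2 ->
  dot N1 (fun i => x1 n i - p1 n i) (fun i => c1 i - p1 n i)
  + dot N2 (fun j => x2 n j - p2 n j) (fun j => c2 j - p2 n j)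
  <= gamma n * (dot N1 (Mv N2 L (x2 n)) (fun i => c1 i - p1 n i)
                - dot N2 (Mtv N1 L (x1 n)) (fun j => c2 j - p2 n j)).
Proof.
  intros Hc1 Hc2.
  pose proof (proj_variational N1 _ _ _ _ (simplex_convex N1) (Hp1 n) Hc1) as V1.
  pose proof (proj_variational N2 _ _ _ _ (simplex_convex N2) (Hp2 n) Hc2) as V2.
  replace (dot N1 (fun i => y1 n i - p1 n i) (fun i => c1 i - p1 n i))
    with (dot N1 (fun i => x1 n i - p1 n i) (fun i => c1 i - p1 n i)
          - gamma n * dot N1 (Mv N2 L (x2 n)) (fun i => c1 i - p1 n i)) in V1
    by (merge_vsums; intros i Hi; rewrite Hy1 by exact Hi; ring).
  replace (dot N2 (fun j => y2 n j - p2 n j) (fun j => c2 j - p2 n j))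
    with (dot N2 (fun j => x2 n j - p2 n j) (fun j => c2 j - p2 n j)
          + gamma n * dot N2 (Mtv N1 L (x1 n)) (fun j => c2 j - p2 n j)) in V2
    by (merge_vsums; intros j Hj; rewrite Hy2 by exact Hj; ring).
  lra.
Qed.

Lemma iter_cluster_point : Un_cv residual 0 ->
  exists sg a1 a2, strictly_increasing sg /\
    (forall i, (i < N1)%nat -> Un_cv (fun n => x1 (sg n) i) (a1 i) /\ Un_cv (fun n => p1 (sg n) i) (a1 i)) /\
    (forall j, (j < N2)%nat -> Un_cv (fun n => x2 (sg n) j) (a2 j) /\ Un_cv (fun n => p2 (sg n) j) (a2 j)).
Proof.
  intros Hres.
  assert (Hgap1 : forall i, (i < N1)%nat -> Un_cv (fun n => x1 n i - p1 n i) 0).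
  { intros i Hi. apply (cv_of_sq_bound _ residual); [|exact Hres]. intro n.
    pose proof (sqdist_ge_coord N1 (x1 n) (p1 n) i Hi). pose proof (sqdist_nonneg N2 (x2 n) (p2 n)).
    unfold residual. rewrite Rminus_0_r. lra. }
  assert (Hgap2 : forall j, (j < N2)%nat -> Un_cv (fun n => x2 n j - p2 n j) 0).
  { intros j Hj. apply (cv_of_sq_bound _ residual); [|exact Hres]. intro n.
    pose proof (sqdist_ge_coord N2 (x2 n) (p2 n) j Hj). pose proof (sqdist_nonneg N1 (x1 n) (p1 n)).
    unfold residual. rewrite Rminus_0_r. lra. }
  destruct (bounded_vec_cv_subseq N1 p1 0 1) as (phi & a1 & Hphi & Ha1).
  { intros n i Hi. apply (proj1 (proj1 (Hp1 n)) i Hi). }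
  destruct (bounded_vec_cv_subseq N2 (fun n => p2 (phi n)) 0 1) as (psi & a2 & Hpsi & Ha2).
  { intros n j Hj. apply (proj1 (proj1 (Hp2 (phi n))) j Hj). }
  set (sg n := phi (psi n)).
  assert (Hsg : strictly_increasing sg) by exact (strictly_increasing_comp phi psi Hphi Hpsi).
  exists sg, a1, a2. split; [exact Hsg|split].
  - intros i Hi. assert (P : Un_cv (fun n => p1 (sg n) i) (a1 i)) 
      by exact (cv_subseq psi (fun n => p1 (phi n) i) (a1 i) Hpsi (Ha1 i Hi)).
    split; [|exact P]. rewrite <- (Rplus_0_l (a1 i)).
    apply (Un_cv_ext (fun n => (x1 (sg n) i - p1 (sg n) i) + p1 (sg n) i)); [intro; ring|].
    apply CV_plus; [apply (cv_subseq sg (fun n => x1 n i - p1 n i)); auto|exact P].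
  - intros j Hj. assert (P : Un_cv (fun n => p2 (sg n) j) (a2 j)) by (apply Ha2, Hj).
    split; [|exact P]. rewrite <- (Rplus_0_l (a2 j)).
    apply (Un_cv_ext (fun n => (x2 (sg n) j - p2 (sg n) j) + p2 (sg n) j)); [intro; ring|].
    apply CV_plus; [apply (cv_subseq sg (fun n => x2 n j - p2 n j)); auto|exact P].
Qed.

Lemma iter_cluster_saddle (sg : nat -> nat) a1 a2 :
  (forall i, (i < N1)%nat -> Un_cv (fun n => x1 (sg n) i) (a1 i) /\ Un_cv (fun n => p1 (sg n) i) (a1 i)) ->
  (forall j, (j < N2)%nat -> Un_cv (fun n => x2 (sg n) j) (a2 j) /\ Un_cv (fun n => p2 (sg n) j) (a2 j)) ->
  saddle a1 a2.
Proof.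
  intros H1 H2.
  split; [apply (simplex_closed N1 (fun n => p1 (sg n))); [intro n; apply Hp1|apply H1]|].
  split; [apply (simplex_closed N2 (fun n => p2 (sg n))); [intro n; apply Hp2|apply H2]|].
  intros c1 c2 Hc1 Hc2.
  set (s n := dot N1 (Mv N2 L (x2 (sg n))) (fun i => c1 i - p1 (sg n) i)
              - dot N2 (Mtv N1 L (x1 (sg n))) (fun j => c2 j - p2 (sg n) j)).
  set (t n := dot N1 (fun i => x1 (sg n) i - p1 (sg n) i) (fun i => c1 i - p1 (sg n) i)
              + dot N2 (fun j => x2 (sg n) j - p2 (sg n) j) (fun j => c2 j - p2 (sg n) j)).
  assert (Hc1cv : forall i, (i < N1)%nat -> Un_cv (fun n => c1 i - p1 (sg n) i) (c1 i - a1 i))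
    by (intros; apply CV_minus; [apply cv_const|apply H1; assumption]).
  assert (Hc2cv : forall j, (j < N2)%nat -> Un_cv (fun n => c2 j - p2 (sg n) j) (c2 j - a2 j))
    by (intros; apply CV_minus; [apply cv_const|apply H2; assumption]).
  assert (Hgap1 : forall i, (i < N1)%nat -> Un_cv (fun n => x1 (sg n) i - p1 (sg n) i) 0)
    by (intros; rewrite <- (Rminus_diag (a1 i)); apply CV_minus; apply H1; assumption).
  assert (Hgap2 : forall j, (j < N2)%nat -> Un_cv (fun n => x2 (sg n) j - p2 (sg n) j) 0)
    by (intros; rewrite <- (Rminus_diag (a2 j)); apply CV_minus; apply H2; assumption).
  apply (limit_nonneg_of_le_scaled (fun n => gamma (sg n)) s t eps); [exact Heps|intro; apply Hgamma_lb| | |].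
  - intro n. apply iter_projection_inequality; assumption.
  - apply CV_minus; apply dot_cv; try assumption.
    + intros i _. apply Mv_cv. intros j Hj. apply H2, Hj.
    + intros j _. apply Mtv_cv. intros i Hi. apply H1, Hi.
  - unfold t. rewrite <- (Rplus_0_l 0). apply CV_plus.
    + apply (dot_cv0_l N1 (fun n i => x1 (sg n) i - p1 (sg n) i) (fun n i => c1 i - p1 (sg n) i)
               (fun i => c1 i - a1 i)); assumption.
    + apply (dot_cv0_l N2 (fun n j => x2 (sg n) j - p2 (sg n) j) (fun n j => c2 j - p2 (sg n) j)
               (fun j => c2 j - a2 j)); assumption.
Qed.

Lemma fbf_iteration_cv z1 z2 : saddle z1 z2 ->
  exists a1 a2, saddle a1 a2 /\
    (forall i, (i < N1)%nat -> Un_cv (fun n => x1 n i) (a1 i)) /\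
    (forall j, (j < N2)%nat -> Un_cv (fun n => x2 n j) (a2 j)).
Proof.
  intros Hz.
  destruct (iter_cluster_point (iter_residual_cv0 z1 z2 Hz)) as (sg & a1 & a2 & _ & H1 & H2).
  assert (Ha : saddle a1 a2) by exact (iter_cluster_saddle sg a1 a2 H1 H2).
  assert (Hdist : Un_cv (dist_to a1 a2) 0).
  { apply (decreasing_subseq_cv0 _ sg).
    - intro n. pose proof (iter_fejer a1 a2 Ha n). pose proof (sqdist_nonneg N1 (x1 n) (p1 n)).
      pose proof (sqdist_nonneg N2 (x2 n) (p2 n)). unfold residual in *. nra.
    - apply dist_to_nonneg.
    - rewrite <- (Rplus_0_l 0). apply CV_plus.
      + apply (sqdist_cv0 N1 (fun n => x1 (sg n))). intros; apply H1; assumption.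
      + apply (sqdist_cv0 N2 (fun n => x2 (sg n))). intros; apply H2; assumption. }
  exists a1, a2. split; [exact Ha|split].
  - intros i Hi. apply (cv_of_sq_bound _ (dist_to a1 a2)); [|exact Hdist]. intro n.
    pose proof (sqdist_ge_coord N1 (x1 n) a1 i Hi). pose proof (sqdist_nonneg N2 (x2 n) a2).
    unfold dist_to. lra.
  - intros j Hj. apply (cv_of_sq_bound _ (dist_to a1 a2)); [|exact Hdist]. intro n.
    pose proof (sqdist_ge_coord N2 (x2 n) a2 j Hj). pose proof (sqdist_nonneg N1 (x1 n) a1).
    unfold dist_to. lra.
Qed.

End FBFIteration.

Theorem mainTheorem6
  (N1 N2 : nat) (HN1 : (1 <= N1)%nat) (HN2 : (1 <= N2)%nat)
  (L : nat -> nat -> R)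
  (HL0 : exists i j, (i < N1)%nat /\ (j < N2)%nat /\ L i j <> 0)
  (nL : R) (HnL : is_opnorm N1 N2 L nL)
  (Hsol : exists z1 z2, simplex N1 z1 /\ simplex N2 z2 /\
     in_normal_cone N1 (simplex N1) z1 (fun i => - Mv N2 L z2 i) /\
     in_normal_cone N2 (simplex N2) z2 (Mtv N1 L z1))
  (eps : R) (Heps : 0 < eps < 1 / (nL + 1))
  (gamma : nat -> R) (Hgamma : forall n, eps <= gamma n <= (1 - eps) / nL)
  (x1 y1 p1 q1 : nat -> nat -> R) (x2 y2 p2 q2 : nat -> nat -> R)
  (Hy1 : forall n i, (i < N1)%nat -> y1 n i = x1 n i - gamma n * Mv N2 L (x2 n) i)
  (Hy2 : forall n j, (j < N2)%nat -> y2 n j = x2 n j + gamma n * Mtv N1 L (x1 n) j)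
  (Hp1 : forall n, is_proj N1 (simplex N1) (y1 n) (p1 n))
  (Hp2 : forall n, is_proj N2 (simplex N2) (y2 n) (p2 n))
  (Hq1 : forall n i, (i < N1)%nat -> q1 n i = p1 n i - gamma n * Mv N2 L (p2 n) i)
  (Hq2 : forall n j, (j < N2)%nat -> q2 n j = p2 n j + gamma n * Mtv N1 L (p1 n) j)
  (Hx1 : forall n i, (i < N1)%nat -> x1 (S n) i = x1 n i - y1 n i + q1 n i)
  (Hx2 : forall n j, (j < N2)%nat -> x2 (S n) j = x2 n j - y2 n j + q2 n j) :
  exists xb1 xb2 : nat -> R,
    (forall i, (i < N1)%nat -> Un_cv (fun n => x1 n i) (xb1 i)) /\
    (forall j, (j < N2)%nat -> Un_cv (fun n => x2 n j) (xb2 j)) /\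
    (* xb1 in Argmin_{x in C1} x^T L xb2 *)
    simplex N1 xb1 /\
    (forall x, simplex N1 x -> dot N1 xb1 (Mv N2 L xb2) <= dot N1 x (Mv N2 L xb2)) /\
    (* xb2 in Argmax_{x in C2} xb1^T L x *)
    simplex N2 xb2 /\
    (forall x, simplex N2 x -> dot N1 xb1 (Mv N2 L x) <= dot N1 xb1 (Mv N2 L xb2)).
Proof.
  assert (HnL0 := opnorm_nonneg _ _ _ _ HnL).
  assert (Hgamma_lb : forall n, eps <= gamma n) by (intro n; apply Hgamma).
  assert (Hgamma_ub : forall n, gamma n * nL <= 1 - eps).
  { intro n. destruct (Rle_lt_or_eq_dec 0 nL HnL0) as [Hpos|H0].
    - apply Rle_trans with ((1 - eps) / nL * nL); [apply Rmult_le_compat_r; [lra|apply Hgamma]|].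
      right. field. lra.
    - rewrite <- H0 in *. replace (1 / (0 + 1)) with 1 in Heps by field. lra. }
  destruct Hsol as (z1 & z2 & _ & _ & Hnc1 & Hnc2).
  destruct (fbf_iteration_cv N1 N2 L nL eps gamma x1 y1 p1 q1 x2 y2 p2 q2 HnL (proj1 Heps)
              Hgamma_lb Hgamma_ub Hy1 Hy2 Hp1 Hp2 Hq1 Hq2 Hx1 Hx2 z1 z2
              (normal_cone_saddle_point _ _ _ _ _ _ _ Hnc1 Hnc2)) as (a1 & a2 & Ha & Hcv1 & Hcv2).
  exists a1, a2. pose proof Ha as (Ha1 & Ha2 & _).
  split; [exact Hcv1|split; [exact Hcv2|split; [exact Ha1|split; [|split; [exact Ha2|]]]]].
  - intros x Hx. apply (saddle_point_argmin N1 N2 L (simplex N1) (simplex N2)); assumption.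
  - intros y Hy. apply (saddle_point_argmax N1 N2 L (simplex N1) (simplex N2)); assumption.
Qed.
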